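(* For every integer $n\ge 1$, $$\chi_i(Q_n)=\begin{cases} n+1 & \text{if } n=2^m-1 \text{ for some integer } m\ge 0,\\ n+2 & \text{otherwise.}\end{cases}$$
   Context: $Q_n$ is the $n$-dimensional hypercube: vertex set $\{0,1\}^n$, two vertices adjacent iff they differ in exactly one coordinate. An incidence of a graph $G$ is a pair $(v,e)$ with $v\in V(G)$, $e\in E(G)$ and $v\in e$. Two incidences $(v,e)$ and $(u,f)$ are adjacent if $v=u$, or $e=f$, or $vu\in\{e,f\}$. An incidence coloring assigns colors to all incidences so that adjacent incidences receive distinct colors. $\chi_i(G)$ is the least number of colors in an incidence coloring of $G$. *)

From mathcomp Require Import all_boot.
Set Implicit Arguments. Unset Strict Implicit. Unset Printing Implicit Defensive.

(* A simple graph on a finite vertex type V given by a symmetric irreflexive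
   adjacency relation adj. Edges are 2-element vertex sets {x,y} with adj x y. *)
Section IncidenceColoring.
Variables (V : finType) (adj : rel V).

Definition edges : {set {set V}} :=
  [set e : {set V} | [exists x, exists y, adj x y && (e == [set x; y])]].

Definition incidence (p : V * {set V}) : bool := (p.2 \in edges) && (p.1 \in p.2).

Definition inc_adjacent (p q : V * {set V}) : bool :=
  [|| p.1 == q.1, p.2 == q.2, [set p.1; q.1] == p.2 | [set p.1; q.1] == q.2].

Definition incidence_coloring (k : nat) (c : V * {set V} -> 'I_k) : Prop :=
  forall p q, incidence p -> incidence q -> p != q -> inc_adjacent p q -> c p != c q.

Definition incidence_colorable (k : nat) : Prop :=
  exists c : V * {set V} -> 'I_k, incidence_coloring c.

Definition is_incidence_chromatic_number (k : nat) : Prop :=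
  incidence_colorable k /\ forall k', incidence_colorable k' -> k <= k'.

End IncidenceColoring.

Definition hypercube_vertex (n : nat) := {ffun 'I_n -> bool}.
Definition hypercube_adj (n : nat) : rel (hypercube_vertex n) :=
  fun u v => #|[set i | u i != v i]| == 1.

(* Upper bounds: it suffices to label every arc u -> v so that the arcs leaving a
   vertex get distinct labels and each label differs from those of the arcs
   leaving its head; the incidence (u, uv) then takes the label of u -> v.  On
   Q_n with n = 2^m - 1, labelling the arcs entering v by the Hamming syndrome of
   v (the xor of i + 1 over the coordinates i set in v) uses n + 1 colours.  In
   general, split the coordinates into a = 2^p - 1 low and b = n - a <= a high
   ones: arcs along high directions get the high syndrome, arcs along low
   directions get one of b + 1 fresh colours when the low syndrome is at most b,
   and the xor of both syndromes otherwise, for n + 2 colours in all.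
   Lower bounds: the n incidences at a vertex v, together with the incidence of
   a neighbour w on the edge vw, already need n + 1 colours.  With exactly
   n + 1 colours, every vertex misses a unique colour among its own incidences;
   this colour is injective on closed neighbourhoods, so the vertices missing a
   fixed colour form a perfect code and n + 1 divides 2^n. *)

From Stdlib Require Import PeanoNat.
From HB Require Import structures.
From mathcomp Require Import all_boot zify.

Set Implicit Arguments. Unset Strict Implicit. Unset Printing Implicit Defensive.

Lemma expn_natpow m n : m ^ n = Nat.pow m n.
Proof. by elim: n => [|n IHn] //; rewrite expnS IHn. Qed.

Lemma lxor_lt_pow2 p a b : a < 2 ^ p -> b < 2 ^ p -> Nat.lxor a b < 2 ^ p.
Proof.
rewrite expn_natpow => /ltP a_lt /ltP b_lt; apply/ltP.
suff -> : Nat.lxor a b = Nat.modulo (Nat.lxor a b) (Nat.pow 2 p).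
  by apply: Nat.mod_upper_bound; apply: Nat.pow_nonzero.
apply: Nat.bits_inj => i; have [i_lt | p_le] := Nat.lt_ge_cases i p.
  by rewrite Nat.mod_pow2_bits_low.
rewrite Nat.mod_pow2_bits_high // Nat.lxor_spec.
by rewrite -(Nat.mod_small a _ a_lt) -(Nat.mod_small b _ b_lt) !Nat.mod_pow2_bits_high.
Qed.

Lemma lxorA : associative Nat.lxor. Proof. by move=> a b c; rewrite Nat.lxor_assoc. Qed.
Lemma lxor0n : left_id 0 Nat.lxor. Proof. exact: Nat.lxor_0_l. Qed.
HB.instance Definition _ :=
  Monoid.isComLaw.Build nat 0 Nat.lxor lxorA Nat.lxor_comm lxor0n.

Lemma lxorK a b : Nat.lxor a (Nat.lxor a b) = b.
Proof. by rewrite lxorA Nat.lxor_nilpotent lxor0n. Qed.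

Lemma lxor_inj a : injective (Nat.lxor a).
Proof. exact: can_inj (lxorK a). Qed.

Lemma lxor_eq_id a b : (Nat.lxor a b == a) = (b == 0).
Proof. by rewrite -{2}[a]Nat.lxor_0_r (inj_eq (@lxor_inj a)). Qed.

Section IncidenceColoringTheory.
Variables (V : finType) (adj : rel V).
Hypothesis adj_sym : symmetric adj.
Hypothesis adj_irr : irreflexive adj.

Definition nbhd (v : V) : {set V} := [set w | adj v w].
Definition closed_nbhd (v : V) : {set V} := v |: nbhd v.

Lemma adj_neq x y : adj x y -> x != y.
Proof. by apply: contraTneq => ->; rewrite adj_irr. Qed.

Lemma set2_inj (x y z : V) : x != y -> [set x; y] = [set x; z] -> y = z.
Proof.
move=> x_neq_y eq_xyz; have : y \in [set x; z] by rewrite -eq_xyz !inE eqxx orbT.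
by rewrite !inE eq_sym (negbTE x_neq_y) => /eqP.
Qed.

Lemma set2_swap (x y z t : V) : x != z -> [set x; y] = [set z; t] -> z = y /\ x = t.
Proof.
move=> x_neq_z eq_xyzt; split.
  have : z \in [set x; y] by rewrite eq_xyzt !inE eqxx.
  by rewrite !inE eq_sym (negbTE x_neq_z) => /eqP.
have : x \in [set z; t] by rewrite -eq_xyzt !inE eqxx.
by rewrite !inE (negbTE x_neq_z) => /eqP.
Qed.

Lemma incidence_adj x y : adj x y -> incidence adj (x, [set x; y]).
Proof.
move=> xy; rewrite /incidence /= !inE eqxx andbT.
by apply/existsP; exists x; apply/existsP; exists y; rewrite xy eqxx.
Qed.

Lemma incidenceP p : incidence adj p -> exists2 w, adj p.1 w & p.2 = [set p.1; w].
Proof.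
case/andP; rewrite inE => /existsP [x /existsP [y /andP [xy /eqP ->]]].
rewrite !inE => /orP [/eqP -> | /eqP ->]; first by exists y.
by exists x; rewrite 1?adj_sym // setUC.
Qed.

Section ArcColoring.
Variables (k : nat) (f : V -> V -> 'I_k).
Hypothesis f_out : forall u v w, adj u v -> adj u w -> v != w -> f u v != f u w.
Hypothesis f_path : forall u v w, adj u v -> adj v w -> f u v != f v w.

Definition arc_color (p : V * {set V}) : 'I_k :=
  if [pick w | adj p.1 w && (p.2 == [set p.1; w])] is Some w then f p.1 w else f p.1 p.1.

Lemma arc_colorE u v : adj u v -> arc_color (u, [set u; v]) = f u v.
Proof.
move=> uv; rewrite /arc_color; case: pickP => [w /andP [uw /eqP e] | /(_ v)] /=.
  by rewrite (set2_inj (adj_neq uw) (esym e)).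
by rewrite uv eqxx.
Qed.

Lemma arc_color_coloring : incidence_coloring adj arc_color.
Proof.
case=> [a e] [c e'] /incidenceP [b /= ab ->] /incidenceP [d /= cd ->].
rewrite !arc_colorE // /inc_adjacent /=.
have [eq_ac | a_neq_c] := eqVneq a c.
  subst c => pq _; apply: f_out => //.
  by apply: contraNneq pq => ->.
move=> _ /or4P [// | /eqP e_eq | /eqP e_eq | /eqP e_eq].
- case: (set2_swap a_neq_c e_eq) => eq_cb eq_ad; subst c d.
  by apply: f_path; rewrite // adj_sym.
- by have eq_cb := set2_inj a_neq_c e_eq; subst c; apply: f_path.
- rewrite setUC in e_eq; have eq_ad : a = d.
    by apply: set2_inj e_eq; rewrite eq_sym.
  by subst d; rewrite eq_sym; apply: f_path.
Qed.

Lemma arc_coloring_colorable : incidence_colorable adj k.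
Proof. by exists arc_color; apply: arc_color_coloring. Qed.

End ArcColoring.

Section LowerBound.
Variables (k : nat) (c : V * {set V} -> 'I_k).
Hypothesis c_col : incidence_coloring adj c.

Lemma out_color_neq v w w' :
  adj v w -> adj v w' -> w != w' -> c (v, [set v; w]) != c (v, [set v; w']).
Proof.
move=> vw vw' w_neq; apply: c_col; rewrite ?incidence_adj //=.
  by apply: contra w_neq => /eqP [] /(set2_inj (adj_neq vw)) ->.
by rewrite /inc_adjacent eqxx.
Qed.

Lemma in_out_color_neq v w w' :
  adj v w -> adj v w' -> c (w, [set w; v]) != c (v, [set v; w']).
Proof.
move=> vw vw'; apply: c_col.
- by apply: incidence_adj; rewrite adj_sym.
- exact: incidence_adj.
- by apply: contraNneq (adj_neq vw) => -[->].
- by rewrite /inc_adjacent /= eqxx !orbT.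
Qed.

Definition out_colors (v : V) : {set 'I_k} := [set c (v, [set v; w]) | w in nbhd v].

Lemma card_out_colors v : #|out_colors v| = #|nbhd v|.
Proof.
apply: card_in_imset => w w'; rewrite !inE => vw vw'.
move=> eq_c; apply/eqP; apply: contraT => /(out_color_neq vw vw').
by rewrite eq_c eqxx.
Qed.

Lemma in_color_notin v w : adj v w -> c (w, [set w; v]) \notin out_colors v.
Proof.
move=> vw; apply/imsetP => -[w' /[!inE] vw' eq_c].
by move: (in_out_color_neq vw vw'); rewrite eq_c eqxx.
Qed.

Lemma card_nbhd_lt v w : adj v w -> #|nbhd v| < k.
Proof.
move=> vw; rewrite -card_out_colors.
have := max_card (c (w, [set w; v]) |: out_colors v).
by rewrite cardsU1 in_color_notin // card_ord.
Qed.

End LowerBound.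

Section MinimalColoring.
Variables (d : nat) (c : V * {set V} -> 'I_d.+1).
Hypothesis c_col : incidence_coloring adj c.
Hypothesis regular : forall v, #|nbhd v| = d.

Definition missing_color (v : V) : 'I_d.+1 := odflt ord0 [pick x in ~: out_colors c v].

Lemma notin_out_colors v x : (x \notin out_colors c v) = (x == missing_color v).
Proof.
have /cards1P [y def_y] : #|~: out_colors c v| == 1.
  by rewrite cardsCs setCK card_ord (card_out_colors c_col) regular subSnn.
have -> : missing_color v = y.
  by rewrite /missing_color; case: pickP => [z | /(_ y)]; rewrite def_y ?set11 // => /set1P.
by rewrite -in_setC def_y in_set1.
Qed.

Lemma missing_color_adj u w : adj u w -> missing_color w = c (u, [set u; w]).
Proof.
move=> uw; apply/esym/eqP; rewrite -notin_out_colors.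
by apply: in_color_notin; rewrite // adj_sym.
Qed.

Lemma missing_color_inj u : {in closed_nbhd u &, injective missing_color}.
Proof.
have missing_neq w : adj u w -> missing_color w != missing_color u.
  by move=> uw; rewrite -notin_out_colors negbK (missing_color_adj uw) imset_f ?inE.
move=> w w'; rewrite !inE => /predU1P [-> | uw] /predU1P [-> | uw'] //.
- by move=> eq_m; case/eqP: (missing_neq _ uw'); rewrite eq_m.
- by move=> eq_m; case/eqP: (missing_neq _ uw); rewrite eq_m.
rewrite (missing_color_adj uw) (missing_color_adj uw') => eq_c.
apply/eqP; apply: contraT.
by move=> /(out_color_neq c_col uw uw'); rewrite eq_c eqxx.
Qed.

Lemma card_closed_nbhd u : #|closed_nbhd u| = d.+1.
Proof. by rewrite cardsU1 regular inE adj_irr. Qed.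

Lemma closed_nbhd_sym u w : (w \in closed_nbhd u) = (u \in closed_nbhd w).
Proof. by rewrite !inE eq_sym adj_sym. Qed.

Lemma card_closed_nbhd_missing u x :
  #|closed_nbhd u :&: [set w | missing_color w == x]| = 1.
Proof.
have onto : missing_color @: closed_nbhd u = [set: 'I_d.+1].
  apply/eqP; rewrite eqEcard subsetT cardsT card_ord.
  by rewrite (card_in_imset (@missing_color_inj u)) card_closed_nbhd ltnSn.
have /imsetP [w0 w0_in def_x] : x \in missing_color @: closed_nbhd u by rewrite onto inE.
apply/eqP/cards1P; exists w0; apply/setP => w.
rewrite in_setI in_set1 [w \in [set _ | _]]inE.
apply/andP/eqP => [[w_in /eqP m_w] | ->]; last by rewrite w0_in -def_x.
by apply: (missing_color_inj w_in w0_in); rewrite m_w.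
Qed.

Lemma regular_dvdn_card : d.+1 %| #|V|.
Proof.
pose S := [set w | missing_color w == ord0].
have count : \sum_u #|closed_nbhd u :&: S| = #|S| * d.+1.
  rewrite -sum_nat_const.
  transitivity (\sum_u \sum_(w in S) (w \in closed_nbhd u) : nat).
    apply: eq_bigr => u _; rewrite -sum1_card big_mkcond [RHS]big_mkcond /=.
    by apply: eq_bigr => w _; rewrite in_setI andbC; case: (w \in S).
  rewrite exchange_big /=; apply: eq_bigr => w _.
  rewrite -(card_closed_nbhd w) -sum1_card [RHS]big_mkcond /=.
  by apply: eq_bigr => u _; rewrite closed_nbhd_sym; case: (_ \in _).
rewrite -sum1_card (eq_bigr _ (fun u _ => esym (card_closed_nbhd_missing u ord0))).
by rewrite count dvdn_mull.
Qed.

End MinimalColoring.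
End IncidenceColoringTheory.

Section Hypercube.
Variable n : nat.
Notation V := (hypercube_vertex n).
Notation adj := (@hypercube_adj n).

Definition flip (u : V) (i : 'I_n) : V := [ffun j => if j == i then ~~ u j else u j].

Lemma flip_at (u : V) i : flip u i i = ~~ u i.
Proof. by rewrite ffunE eqxx. Qed.

Lemma flip_inj (u : V) : injective (flip u).
Proof.
move=> i j eq_ij; apply/eqP; apply: contraT => i_neq_j.
by have := congr1 (fun w : V => w i) eq_ij; rewrite /= flip_at ffunE (negbTE i_neq_j); case: (u i).
Qed.

Lemma diff_flip (u : V) i : [set j | u j != flip u i j] = [set i].
Proof.
apply/setP => j; rewrite !inE ffunE.
by have [-> | _] := eqVneq j i; [case: (u i) | rewrite eqxx].
Qed.

Lemma adj_flip (u : V) i : adj u (flip u i).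
Proof. by rewrite /hypercube_adj diff_flip cards1. Qed.

Lemma hypercube_adjP (u v : V) : adj u v -> exists i, v = flip u i.
Proof.
move=> /cards1P [i /setP def_i]; exists i; apply/ffunP => j; rewrite ffunE.
move: (def_i j); rewrite !inE.
by case: (j == i); case: (u j); case: (v j).
Qed.

Lemma hypercube_adj_sym : symmetric adj.
Proof.
by move=> u v; rewrite /hypercube_adj; congr (_ == 1); apply: eq_card => j; rewrite !inE eq_sym.
Qed.

Lemma hypercube_adj_irr : irreflexive adj.
Proof.
by move=> u; rewrite /hypercube_adj eq_card0 // => j; rewrite !inE eqxx.
Qed.

Lemma hypercube_nbhd (u : V) : nbhd adj u = [set flip u i | i : 'I_n].
Proof.
apply/setP => v; rewrite inE; apply/idP/imsetP => [/hypercube_adjP [i ->] | [i _ ->]].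
  by exists i.
exact: adj_flip.
Qed.

Lemma card_hypercube_nbhd (u : V) : #|nbhd adj u| = n.
Proof. by rewrite hypercube_nbhd card_imset ?card_ord //; apply: flip_inj. Qed.

Lemma card_hypercube : #|V| = 2 ^ n.
Proof. by rewrite card_ffun card_bool card_ord. Qed.

Lemma pick_diff_flip (u : V) i : [pick j | u j != flip u i j] = Some i.
Proof.
case: pickP => [j | /(_ i)]; last by rewrite flip_at; case: (u i).
by move=> diff_j; congr Some; apply/set1P; rewrite -(diff_flip u) inE.
Qed.

(* g v i labels the arc entering v along direction i. *)
Section Labelling.
Variables (K : nat) (g : V -> 'I_n -> nat).
Hypothesis g_le : forall v i, g v i <= K.
Hypothesis g_out : forall u i j, i != j -> g (flip u i) i != g (flip u j) j.
Hypothesis g_path : forall v i j, g v i != g (flip v j) j.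

Definition labelling_arc_color (u v : V) : 'I_K.+1 :=
  inord (if [pick j | u j != v j] is Some i then g v i else 0).

Lemma labelling_arc_color_flip u i : labelling_arc_color u (flip u i) = inord (g (flip u i) i).
Proof. by rewrite /labelling_arc_color pick_diff_flip. Qed.

Lemma inord_label_neq v i w j : g v i != g w j -> (inord (g v i) : 'I_K.+1) != inord (g w j).
Proof.
apply: contra => /eqP /(congr1 val) /=.
by rewrite !inordK ?ltnS ?g_le // => ->.
Qed.

Lemma labelling_colorable : incidence_colorable adj K.+1.
Proof.
apply: (arc_coloring_colorable hypercube_adj_sym hypercube_adj_irr (f := labelling_arc_color)).
  move=> u v w /hypercube_adjP [i ->] /hypercube_adjP [j ->] v_neq_w.
  rewrite !labelling_arc_color_flip inord_label_neq // g_out //.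
  by apply: contraNneq v_neq_w => ->.
move=> u v w /hypercube_adjP [i ->] /hypercube_adjP [j ->].
by rewrite !labelling_arc_color_flip inord_label_neq.
Qed.

End Labelling.
End Hypercube.

Section XorSum.
Variables (n : nat) (P : pred 'I_n) (L : 'I_n -> nat).

Definition xorsum (v : hypercube_vertex n) : nat := \big[Nat.lxor/0]_(i | P i && v i) L i.

Lemma xorsum_flip v j :
  xorsum (flip v j) = if P j then Nat.lxor (xorsum v) (L j) else xorsum v.
Proof.
rewrite /xorsum !big_mkcondr /=; case: ifP => Pj; last first.
  by apply: eq_bigr => i Pi; rewrite ffunE; case: eqP => // eq_ij; rewrite eq_ij Pj in Pi.
rewrite (bigD1 j) // [in RHS](bigD1 j) //= flip_at.
rewrite (eq_bigr (fun i => if v i then L i else 0)) => [|i /andP [_ i_neq_j]]; last first.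
  by rewrite ffunE (negbTE i_neq_j).
case: (v j) => /=; rewrite lxor0n; last by rewrite Nat.lxor_comm.
by rewrite [in RHS]Nat.lxor_comm lxorK.
Qed.

Lemma xorsum_lt p v : (forall i, P i -> L i < 2 ^ p) -> xorsum v < 2 ^ p.
Proof.
move=> L_lt; apply: (big_ind (fun x => x < 2 ^ p)) => [||i /andP [Pi _]].
- by rewrite expn_gt0.
- exact: lxor_lt_pow2.
- exact: L_lt.
Qed.

End XorSum.

Lemma hypercube_colorable_pow2 n m : n.+1 = 2 ^ m -> incidence_colorable (@hypercube_adj n) n.+1.
Proof.
move=> n1_pow2; pose s := xorsum predT (fun i : 'I_n => i.+1).
apply: (@labelling_colorable n n (fun v _ => s v)).
- by move=> v _; rewrite -ltnS n1_pow2 xorsum_lt // => i _; rewrite -n1_pow2 ltnS.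
- by move=> u i j i_neq_j; rewrite /s !xorsum_flip /= (inj_eq (@lxor_inj _)) eqSS.
- by move=> v i j; rewrite /s xorsum_flip /= eq_sym lxor_eq_id.
Qed.

Section SplitLabelling.
Variables (n a p : nat).
Hypothesis a_pow2 : a.+1 = 2 ^ p.
Hypothesis a_le_n : a <= n.
Hypothesis n_le_2a : n <= a + a.

Lemma lxor_le x y : x <= a -> y <= a -> Nat.lxor x y <= a.
Proof. by move=> x_le y_le; rewrite -ltnS a_pow2 lxor_lt_pow2 // -a_pow2 ltnS. Qed.

Definition low_label (x y : nat) : nat := if x <= n - a then a.+1 + x else Nat.lxor y x.

Lemma low_label_inj x x' y :
  x <= a -> x' <= a -> y <= a -> low_label x y = low_label x' y -> x = x'.
Proof.
move=> x_le x'_le y_le; rewrite /low_label.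
have := lxor_le y_le x_le; have := lxor_le y_le x'_le.
by case: ifP => _; case: ifP => _ yx' yx; [lia | lia | lia | exact: lxor_inj].
Qed.

Lemma low_label_neq x y t :
  x <= a -> y <= a -> t <= n - a -> low_label x y != Nat.lxor y t.
Proof.
move=> x_le y_le t_le; rewrite /low_label; case: ifP => x_small.
  have t_le_a : t <= a by lia.
  by have := lxor_le y_le t_le_a; lia.
by rewrite (inj_eq (@lxor_inj _)); apply: contraFneq x_small => ->.
Qed.

Definition low_syndrome (v : hypercube_vertex n) : nat :=
  xorsum (fun i : 'I_n => i < a) (fun i => i.+1) v.
Definition high_syndrome (v : hypercube_vertex n) : nat :=
  xorsum (fun i : 'I_n => a <= i) (fun i => i.+1 - a) v.

Lemma low_syndrome_flip v j :
  low_syndrome (flip v j) = if j < a then Nat.lxor (low_syndrome v) j.+1 else low_syndrome v.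
Proof. exact: xorsum_flip. Qed.

Lemma high_syndrome_flip v j :
  high_syndrome (flip v j) =
  if a <= j then Nat.lxor (high_syndrome v) (j.+1 - a) else high_syndrome v.
Proof. exact: xorsum_flip. Qed.

Lemma low_syndrome_le v : low_syndrome v <= a.
Proof. by rewrite -ltnS a_pow2 xorsum_lt // => i i_lt; rewrite -a_pow2 ltnS. Qed.

Lemma high_syndrome_le v : high_syndrome v <= a.
Proof.
rewrite -ltnS a_pow2 xorsum_lt // => i _; rewrite -a_pow2 ltnS.
by have := ltn_ord i; lia.
Qed.

Definition split_label (v : hypercube_vertex n) (i : 'I_n) : nat :=
  if a <= i then high_syndrome v else low_label (low_syndrome v) (high_syndrome v).

Lemma split_label_le v i : split_label v i <= n.+1.
Proof.
have X_le := low_syndrome_le v; have Y_le := high_syndrome_le v.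
rewrite /split_label /low_label; case: ifP => _; first lia.
by case: ifP => X_small; [lia | have := lxor_le Y_le X_le; lia].
Qed.

Lemma split_label_out u i j :
  i != j -> split_label (flip u i) i != split_label (flip u j) j.
Proof.
move=> i_neq_j; have i_neq_j' : i != j :> nat by [].
rewrite /split_label !low_syndrome_flip !high_syndrome_flip.
have X_le := low_syndrome_le u; have Y_le := high_syndrome_le u.
have i_lt := ltn_ord i; have j_lt := ltn_ord j.
case: (leqP a i) => a_le_i; case: (leqP a j) => a_le_j /=.
- by rewrite (inj_eq (@lxor_inj _)); lia.
- by rewrite eq_sym low_label_neq // ?lxor_le //; lia.
- by rewrite low_label_neq // ?lxor_le //; lia.
apply: contra i_neq_j' => /eqP eq_labels.
have /lxor_inj [->] // : Nat.lxor (low_syndrome u) i.+1 = Nat.lxor (low_syndrome u) j.+1.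
by apply: low_label_inj eq_labels; rewrite ?lxor_le //; lia.
Qed.

Lemma split_label_path v i j : split_label v i != split_label (flip v j) j.
Proof.
rewrite /split_label !low_syndrome_flip !high_syndrome_flip.
have X_le := low_syndrome_le v; have Y_le := high_syndrome_le v.
have i_lt := ltn_ord i; have j_lt := ltn_ord j.
case: (leqP a i) => a_le_i; case: (leqP a j) => a_le_j /=.
- by rewrite eq_sym lxor_eq_id; lia.
- by rewrite -{1}[high_syndrome v]Nat.lxor_0_r eq_sym low_label_neq ?lxor_le //; lia.
- by rewrite low_label_neq //; lia.
apply/negP => /eqP eq_labels.
have /eqP : low_syndrome v = Nat.lxor (low_syndrome v) j.+1.
  by apply: low_label_inj eq_labels; rewrite ?lxor_le //; lia.
by rewrite eq_sym lxor_eq_id.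
Qed.

Lemma split_colorable : incidence_colorable (@hypercube_adj n) n.+2.
Proof.
apply: (@labelling_colorable n n.+1 split_label).
- exact: split_label_le.
- exact: split_label_out.
- exact: split_label_path.
Qed.

End SplitLabelling.

Lemma hypercube_colorable_gt n k :
  0 < n -> incidence_colorable (@hypercube_adj n) k -> n < k.
Proof.
move=> n_gt0 [c c_col]; pose v : hypercube_vertex n := [ffun => false].
have := card_nbhd_lt (@hypercube_adj_sym n) (@hypercube_adj_irr n) c_col (adj_flip v (Ordinal n_gt0)).
by rewrite card_hypercube_nbhd.
Qed.

Lemma hypercube_colorable_succ2 n : incidence_colorable (@hypercube_adj n) n.+2.
Proof.
pose p := trunc_log 2 n.+1.
have pow_le : 2 ^ p <= n.+1 by apply: trunc_logP.
have lt_pow : n.+1 < 2 ^ p.+1 by apply: trunc_log_ltn.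
have pow_gt0 : 0 < 2 ^ p by rewrite expn_gt0.
rewrite expnS in lt_pow.
by apply: (@split_colorable n (2 ^ p).-1 p); lia.
Qed.

Lemma hypercube_colorable_succ_pow2 n :
  incidence_colorable (@hypercube_adj n) n.+1 -> exists m, n = 2 ^ m - 1.
Proof.
case=> c c_col.
have := regular_dvdn_card (@hypercube_adj_sym n) (@hypercube_adj_irr n) c_col (@card_hypercube_nbhd n).
rewrite card_hypercube => /(dvdn_pfactor _ _ (isT : prime 2)) [m _ n1_eq].
by exists m; rewrite -n1_eq subn1.
Qed.

Theorem mainTheorem4 (n : nat) (hn : 1 <= n) :
  ((exists m : nat, n = 2 ^ m - 1) ->
     is_incidence_chromatic_number (@hypercube_adj n) n.+1) /\
  (~ (exists m : nat, n = 2 ^ m - 1) ->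
     is_incidence_chromatic_number (@hypercube_adj n) n.+2).
Proof.
have lower k := @hypercube_colorable_gt n k hn.
split=> [[m n_eq] | not_pow2]; split.
- by apply: (@hypercube_colorable_pow2 n m); rewrite n_eq subn1 prednK // expn_gt0.
- exact: lower.
- exact: hypercube_colorable_succ2.
- move=> k colorable_k; have := lower k colorable_k.
  rewrite leq_eqVlt => /predU1P [k_eq | //]; rewrite -k_eq in colorable_k.
  by case: not_pow2; apply: hypercube_colorable_succ_pow2.
Qed.
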